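(* Let $\rho>0$ and $\kappa_0=1/\rho$. Consider the differential equation for a function $\tau(s)$ $$\frac{\rho^4\tau'^2}{9-4\rho^2\tau^2}=\rho^2\kappa_0^2-\frac12+\frac{\rho^2\tau^2}{9}\mp\frac16\sqrt{9-4\rho^2\tau^2}.$$ This equation (for one of the two sign choices) admits the explicit exact solution $$\tau(s)=\pm\frac{6\sqrt2}{\rho}\,\frac{\sqrt{Y(s)}\,|Y(s)-1|}{Y(s)^2+6Y(s)+1},\qquad Y(s)=C e^{\pm\frac{2\sqrt2}{\rho}s},$$ where $C>0$ is a constant of integration depending on the initial conditions.
   Context: This differential equation is the condition satisfied by the torsion $\tau(s)$ (as a function of arc length $s$, primes denoting $d/ds$) of a curve with constant curvature $\kappa_0$ lying on a circular cylinder of radius $\rho$. *)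

From Stdlib Require Import Reals.
From Coquelicot Require Import Coquelicot.
Open Scope R_scope.

Definition Ysol (rho C eps : R) (s : R) : R :=
  C * exp (eps * (2 * sqrt 2 / rho) * s).

Definition tausol (rho C eps sg : R) (s : R) : R :=
  let Y := Ysol rho C eps s in
  sg * (6 * sqrt 2 / rho) * (sqrt Y * Rabs (Y - 1) / (Y ^ 2 + 6 * Y + 1)).

(* The ODE at the point s, with derivative value d = tau'(s), tau value t = tau(s),
   and the sign choice "mp" (the symbol \mp: mp = 1 means "-", mp = -1 means "+"). *)
Definition torsion_ode (rho kappa0 mp t d : R) : Prop :=
  rho ^ 4 * d ^ 2 / (9 - 4 * rho ^ 2 * t ^ 2)
  = rho ^ 2 * kappa0 ^ 2 - 1 / 2 + rho ^ 2 * t ^ 2 / 9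
    - mp * (1 / 6) * sqrt (9 - 4 * rho ^ 2 * t ^ 2).

From Stdlib Require Import Reals Lra Psatz.
From Coquelicot Require Import Coquelicot.
Open Scope R_scope.

(* Write Q = Y^2 + 6Y + 1 and A = Y^2 - 10Y + 1.  Then tau = ± (6 sqrt 2 / rho) |sqrt Y (Y - 1) / Q|
   and, since Y' = ± (2 sqrt 2 / rho) Y, tau' = ± (12 / rho^2) sqrt Y (Y + 1) A / Q^2.
   The identity Q^2 - 32 Y (Y - 1)^2 = A^2 gives 9 - 4 rho^2 tau^2 = (3 A / Q)^2, so the square
   root in the equation is 3 |A| / Q; choosing the sign with A, both sides of the equation
   reduce to 16 Y (Y + 1)^2 / Q^2. *)

Definition tau_den (Y : R) : R := Y ^ 2 + 6 * Y + 1.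

Definition tau_disc (Y : R) : R := Y ^ 2 - 10 * Y + 1.

Definition tau_profile (Y : R) : R := sqrt Y * (Y - 1) / tau_den Y.

Definition tau_slope (rho Y : R) : R :=
  - 12 / rho ^ 2 * sqrt Y * (Y + 1) * tau_disc Y / tau_den Y ^ 2.

Lemma sign_mul_Rabs (x : R) : sign x * Rabs x = x.
Proof.
destruct (Rtotal_order x 0) as [Hx | [-> | Hx]].
- rewrite sign_eq_m1, Rabs_left by lra. ring.
- rewrite sign_0. ring.
- rewrite sign_eq_1, Rabs_pos_eq by lra. ring.
Qed.

Lemma sign_unit (x : R) : x <> 0 -> sign x = 1 \/ sign x = -1.
Proof.
intros Hx. destruct (Rtotal_order x 0) as [Hlt | [Heq | Hgt]].
- right. exact (sign_eq_m1 x Hlt).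
- contradiction.
- left. exact (sign_eq_1 x Hgt).
Qed.

Lemma pow2_unit (u : R) : u = 1 \/ u = -1 -> u ^ 2 = 1.
Proof. intros [-> | ->]; ring. Qed.

Lemma tau_den_pos (Y : R) : 0 <= Y -> 0 < tau_den Y.
Proof. intros HY. unfold tau_den. nra. Qed.

Lemma tau_den_sqr_sub (Y : R) :
  tau_den Y ^ 2 - 32 * Y * (Y - 1) ^ 2 = tau_disc Y ^ 2.
Proof. unfold tau_den, tau_disc. ring. Qed.

Lemma tau_profile_neq0 (Y : R) : 0 < Y -> Y <> 1 -> tau_profile Y <> 0.
Proof.
intros HY HY1. unfold tau_profile.
pose proof (sqrt_lt_R0 Y HY). pose proof (tau_den_pos Y (Rlt_le _ _ HY)).
apply Rmult_integral_contrapositive_currified.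
- apply Rmult_integral_contrapositive_currified; lra.
- apply Rinv_neq_0_compat. lra.
Qed.

Lemma tau_profile_sqr (Y : R) :
  0 <= Y -> tau_profile Y ^ 2 = Y * (Y - 1) ^ 2 / tau_den Y ^ 2.
Proof.
intros HY. pose proof (tau_den_pos Y HY).
unfold tau_profile, Rdiv. rewrite !Rpow_mult_distr, pow2_sqrt by exact HY. field. lra.
Qed.

Lemma is_derive_tau_profile (Y : R) :
  0 < Y ->
  is_derive tau_profile Y (- (Y + 1) * tau_disc Y / (2 * sqrt Y * tau_den Y ^ 2)).
Proof.
intros HY. pose proof (tau_den_pos Y (Rlt_le _ _ HY)) as HQ.
pose proof (sqrt_lt_R0 Y HY) as Hr.
unfold tau_profile, tau_den in *.
auto_derive.
- repeat split; lra.
- unfold tau_disc.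
  assert (HYr : Y = sqrt Y ^ 2) by (symmetry; apply pow2_sqrt; lra).
  set (r := sqrt Y) in *. clearbody r. subst Y.
  field. lra.
Qed.

Lemma Ysol_pos (rho C eps s : R) : 0 < C -> 0 < Ysol rho C eps s.
Proof. intros HC. unfold Ysol. pose proof (exp_pos (eps * (2 * sqrt 2 / rho) * s)). nra. Qed.

Lemma is_derive_Ysol (rho C eps s : R) :
  is_derive (Ysol rho C eps) s (eps * (2 * sqrt 2 / rho) * Ysol rho C eps s).
Proof. unfold Ysol. auto_derive; [exact I | ring]. Qed.

Lemma tausol_profile (rho C eps sg : R) :
  0 < C ->
  forall s, tausol rho C eps sg s
            = sg * (6 * sqrt 2 / rho) * Rabs (tau_profile (Ysol rho C eps s)).
Proof.
intros HC s. pose proof (Ysol_pos rho C eps s HC) as HY.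
pose proof (tau_den_pos _ (Rlt_le _ _ HY)) as HQ.
unfold tausol, tau_profile, Rdiv.
rewrite !Rabs_mult, Rabs_inv, (Rabs_pos_eq (sqrt _)) by apply sqrt_pos.
rewrite (Rabs_pos_eq (tau_den _)) by lra.
reflexivity.
Qed.

Lemma is_derive_tausol (rho C eps sg s : R) :
  rho <> 0 -> 0 < C -> Ysol rho C eps s <> 1 ->
  is_derive (tausol rho C eps sg) s
    (sg * eps * sign (tau_profile (Ysol rho C eps s)) * tau_slope rho (Ysol rho C eps s)).
Proof.
intros Hrho HC HY1. pose proof (Ysol_pos rho C eps s HC) as HY.
apply (is_derive_ext (fun t => sg * (6 * sqrt 2 / rho) * Rabs (tau_profile (Ysol rho C eps t)))).
{ intros t. symmetry. exact (tausol_profile rho C eps sg HC t). }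
set (Y := Ysol rho C eps s) in *.
set (dp := - (Y + 1) * tau_disc Y / (2 * sqrt Y * tau_den Y ^ 2)).
assert (Hslope : 6 * sqrt 2 / rho * (2 * sqrt 2 / rho) * (Y * dp) = tau_slope rho Y).
{ pose proof (tau_den_pos Y (Rlt_le _ _ HY)). pose proof (sqrt_lt_R0 Y HY).
  replace (6 * sqrt 2 / rho * (2 * sqrt 2 / rho)) with (12 * (sqrt 2 * sqrt 2) / rho ^ 2)
    by (field; exact Hrho).
  rewrite sqrt_sqrt by lra.
  unfold dp, tau_slope. rewrite <- (sqrt_sqrt Y) at 1 by lra. field. lra. }
replace (sg * eps * _ * _) with
  (sg * (6 * sqrt 2 / rho) * (sign (tau_profile Y) * (eps * (2 * sqrt 2 / rho) * Y * dp)))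
  by (rewrite <- Hslope; ring).
apply is_derive_scal, (is_derive_Rabs (fun t => tau_profile (Ysol rho C eps t))).
- exact (is_derive_comp tau_profile (Ysol rho C eps) s _ _
           (is_derive_tau_profile _ HY) (is_derive_Ysol _ _ _ _)).
- exact (tau_profile_neq0 _ HY HY1).
Qed.

Lemma tausol_sqr (rho C eps sg s : R) :
  rho <> 0 -> 0 < C -> (sg = 1 \/ sg = -1) ->
  tausol rho C eps sg s ^ 2
  = 72 * Ysol rho C eps s * (Ysol rho C eps s - 1) ^ 2
    / (rho ^ 2 * tau_den (Ysol rho C eps s) ^ 2).
Proof.
intros Hrho HC Hsg. pose proof (Ysol_pos rho C eps s HC) as HY.
pose proof (tau_den_pos _ (Rlt_le _ _ HY)).
rewrite tausol_profile by exact HC.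
rewrite !Rpow_mult_distr, pow2_abs, tau_profile_sqr, pow2_unit by (exact Hsg || lra).
replace ((6 * sqrt 2 / rho) ^ 2) with (36 * (sqrt 2 * sqrt 2) / rho ^ 2) by (field; exact Hrho).
rewrite sqrt_sqrt by lra.
field. lra.
Qed.

Lemma tau_slope_sqr (rho Y : R) :
  rho <> 0 -> 0 <= Y ->
  tau_slope rho Y ^ 2
  = 144 * Y * (Y + 1) ^ 2 * tau_disc Y ^ 2 / (rho ^ 4 * tau_den Y ^ 4).
Proof.
intros Hrho HY. pose proof (tau_den_pos Y HY).
unfold tau_slope, Rdiv. rewrite !Rpow_mult_distr, pow2_sqrt by exact HY.
field. lra.
Qed.

Lemma torsion_radicand (rho Y t : R) :
  rho <> 0 -> 0 <= Y ->
  t ^ 2 = 72 * Y * (Y - 1) ^ 2 / (rho ^ 2 * tau_den Y ^ 2) ->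
  9 - 4 * rho ^ 2 * t ^ 2 = (3 * tau_disc Y / tau_den Y) ^ 2.
Proof.
intros Hrho HY Ht. pose proof (tau_den_pos Y HY).
replace ((3 * tau_disc Y / tau_den Y) ^ 2) with (9 * tau_disc Y ^ 2 / tau_den Y ^ 2)
  by (field; lra).
rewrite Ht, <- tau_den_sqr_sub. field. lra.
Qed.

Lemma torsion_ode_of_sqr (rho Y t d : R) :
  0 < rho -> 0 <= Y -> tau_disc Y <> 0 ->
  t ^ 2 = 72 * Y * (Y - 1) ^ 2 / (rho ^ 2 * tau_den Y ^ 2) ->
  d ^ 2 = 144 * Y * (Y + 1) ^ 2 * tau_disc Y ^ 2 / (rho ^ 4 * tau_den Y ^ 4) ->
  torsion_ode rho (1 / rho) (sign (tau_disc Y)) t d.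
Proof.
intros Hrho HY HA Ht Hd. pose proof (tau_den_pos Y HY).
unfold torsion_ode.
rewrite (torsion_radicand rho Y t) by (exact Ht || lra).
assert (Hroot : sqrt ((3 * tau_disc Y / tau_den Y) ^ 2) = 3 * Rabs (tau_disc Y) / tau_den Y).
{ rewrite <- pow2_abs, sqrt_pow2 by apply Rabs_pos.
  unfold Rdiv. rewrite !Rabs_mult, Rabs_inv, (Rabs_pos_eq 3), (Rabs_pos_eq (tau_den Y)) by lra.
  reflexivity. }
rewrite Hroot.
replace (sign (tau_disc Y) * (1 / 6) * _)
  with (sign (tau_disc Y) * Rabs (tau_disc Y) / (2 * tau_den Y)) by (field; lra).
rewrite sign_mul_Rabs, Ht, Hd.
unfold tau_disc, tau_den in *. field. repeat split; lra.
Qed.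

Theorem corollary3p4 :
  forall (rho C eps sg : R),
    0 < rho -> 0 < C ->
    (eps = 1 \/ eps = -1) -> (sg = 1 \/ sg = -1) ->
    let kappa0 := 1 / rho in
    forall s : R,
      Ysol rho C eps s <> 1 ->
      9 - 4 * rho ^ 2 * (tausol rho C eps sg s) ^ 2 <> 0 ->
      exists d : R,
        is_derive (tausol rho C eps sg) s d /\
        exists mp : R, (mp = 1 \/ mp = -1) /\
          torsion_ode rho kappa0 mp (tausol rho C eps sg s) d.
Proof.
intros rho C eps sg Hrho HC Heps Hsg kappa0 s HY1 Hgap.
pose proof (Ysol_pos rho C eps s HC) as HY.
pose proof (tausol_sqr rho C eps sg s ltac:(lra) HC Hsg) as Ht.
set (Y := Ysol rho C eps s) in *.
assert (HA : tau_disc Y <> 0).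
{ intros HA. apply Hgap.
  pose proof (tau_den_pos Y (Rlt_le _ _ HY)).
  rewrite (torsion_radicand rho Y _ ltac:(lra) ltac:(lra) Ht), HA. field. lra. }
exists (sg * eps * sign (tau_profile Y) * tau_slope rho Y). split.
- apply is_derive_tausol; [lra | exact HC | exact HY1].
- exists (sign (tau_disc Y)). split; [exact (sign_unit _ HA) |].
  apply torsion_ode_of_sqr; [exact Hrho | lra | exact HA | exact Ht |].
  pose proof (sign_unit _ (tau_profile_neq0 Y HY HY1)) as Hsign.
  rewrite !Rpow_mult_distr, (pow2_unit sg Hsg), (pow2_unit eps Heps), (pow2_unit _ Hsign).
  rewrite tau_slope_sqr by lra.
  ring.
Qed.
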